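(* Let $G$ be a finitely generated group. Then $RF(G)$ is finitely presented if and only if $RF_{na}(G)$ is finitely presented.
   Context: $\mathbb F$ denotes a non-abelian free group. $RF(G)$ is the quotient of $G$ by the intersection of the kernels of all homomorphisms $G\to\mathbb F$; $RF_{na}(G)$ is the quotient of $G$ by the intersection of the kernels of all homomorphisms $G\to\mathbb F$ with non-abelian image. *)

From Stdlib Require Import List ClassicalEpsilon FunctionalExtensionality
  PropExtensionality ProofIrrelevance.
Set Implicit Arguments.
Unset Strict Implicit.

Record grp : Type := Grp {
  car :> Type;
  gmul : car -> car -> car;
  ginv : car -> car;
  gone : car;
  gmulA : forall x y z, gmul x (gmul y z) = gmul (gmul x y) z;
  gmul1 : forall x, gmul gone x = x;
  gmulV : forall x, gmul (ginv x) x = gone }.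
Arguments gmul {g} _ _.
Arguments ginv {g} _.
Arguments gone {g}.

Section GroupBasics.
Variable G : grp.
Implicit Types x y z : G.

Lemma mulgVr x : gmul x (ginv x) = gone.
Proof.
  transitivity (gmul (gmul (ginv (ginv x)) (ginv x)) (gmul x (ginv x))).
  - now rewrite gmulV, gmul1.
  - rewrite <- gmulA, (@gmulA G (ginv x) x (ginv x)), gmulV, gmul1.
    apply gmulV.
Qed.

Lemma mulg1 x : gmul x gone = x.
Proof. rewrite <- (@gmulV G x), gmulA, mulgVr. apply gmul1. Qed.

Lemma mulKV x y : gmul x (gmul (ginv x) y) = y.
Proof. rewrite gmulA, mulgVr. apply gmul1. Qed.

Lemma mulVK x y : gmul (ginv x) (gmul x y) = y.
Proof. rewrite gmulA, gmulV. apply gmul1. Qed.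

Lemma inv_uniq_l x y : gmul y x = gone -> y = ginv x.
Proof.
  intro H. rewrite <- (mulg1 y), <- (mulgVr x), gmulA, H. apply gmul1.
Qed.

Lemma invK x : ginv (ginv x) = x.
Proof. symmetry. apply inv_uniq_l. apply mulgVr. Qed.

Lemma invM x y : ginv (gmul x y) = gmul (ginv y) (ginv x).
Proof.
  symmetry. apply inv_uniq_l.
  rewrite <- gmulA, (@gmulA G (ginv x) x y), gmulV, gmul1. apply gmulV.
Qed.

Lemma inv1 : ginv (@gone G) = gone.
Proof. symmetry. apply inv_uniq_l. apply gmul1. Qed.

End GroupBasics.

Definition is_hom (G H : grp) (f : G -> H) : Prop :=
  forall x y : G, f (gmul x y) = gmul (f x) (f y).

Lemma hom1 (G H : grp) (f : G -> H) : is_hom f -> f gone = gone.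
Proof.
  intro Hf. assert (E : f gone = gmul (f gone) (f gone)).
  { rewrite <- Hf. now rewrite gmul1. }
  transitivity (gmul (ginv (f gone)) (gmul (f gone) (f gone))).
  - symmetry. apply mulVK.
  - rewrite <- E. apply gmulV.
Qed.

Lemma homV (G H : grp) (f : G -> H) x : is_hom f -> f (ginv x) = ginv (f x).
Proof.
  intro Hf. apply inv_uniq_l. rewrite <- Hf, gmulV. now apply hom1.
Qed.

Definition subgroup (G : grp) (S : G -> Prop) : Prop :=
  S gone /\ (forall x y, S x -> S y -> S (gmul x y)) /\ (forall x, S x -> S (ginv x)).

Definition normal (G : grp) (N : G -> Prop) : Prop :=
  subgroup N /\ (forall g x : G, N x -> N (gmul (gmul (ginv g) x) g)).

Definition fin_gen (G : grp) : Prop :=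
  exists (n : nat) (gen : {i : nat | i < n} -> G),
    forall (S : G -> Prop), subgroup S -> (forall i, S (gen i)) -> forall y, S y.

Section Quotient.
Variable G : grp.
Variable K : G -> Prop.
Hypothesis HK : normal K.

Definition cls (g : G) : G -> Prop := fun y => K (gmul (ginv g) y).
Definition Qcar : Type := {P : G -> Prop | exists g, P = cls g}.
Definition qmk (g : G) : Qcar := exist _ (cls g) (ex_intro _ g eq_refl).
Definition qrep (A : Qcar) : G :=
  proj1_sig (constructive_indefinite_description _ (proj2_sig A)).
Lemma qrepP (A : Qcar) : proj1_sig A = cls (qrep A).
Proof. unfold qrep. exact (proj2_sig (constructive_indefinite_description (fun g => proj1_sig A = cls g) (proj2_sig A))). Qed.

Lemma qmk_rep A : qmk (qrep A) = A.
Proof.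
  destruct A as [P HP]. unfold qmk. apply subset_eq_compat.
  symmetry. exact (qrepP (exist _ P HP)).
Qed.

Lemma qmk_surj A : exists g, A = qmk g.
Proof. exists (qrep A). symmetry. apply qmk_rep. Qed.

Lemma qmk_eq g h : K (gmul (ginv g) h) -> qmk g = qmk h.
Proof.
  destruct HK as [[K1 [KM KV]] KC]. intro Hgh.
  unfold qmk. apply subset_eq_compat.
  apply functional_extensionality; intro y. apply propositional_extensionality.
  unfold cls. split; intro Hy.
  - replace (gmul (ginv h) y) with (gmul (ginv (gmul (ginv g) h)) (gmul (ginv g) y)).
    + apply KM; auto.
    + rewrite invM, invK, <- gmulA. now rewrite mulKV.
  - replace (gmul (ginv g) y) with (gmul (gmul (ginv g) h) (gmul (ginv h) y)).
    + apply KM; auto.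
    + rewrite <- gmulA. now rewrite mulKV.
Qed.

Lemma rep_mk g : K (gmul (ginv (qrep (qmk g))) g).
Proof.
  destruct HK as [[K1 _] _].
  pose proof (qrepP (qmk g)) as E. simpl in E.
  change (cls (qrep (qmk g)) g). rewrite <- E. unfold cls. now rewrite gmulV.
Qed.

Definition qmul (A B : Qcar) : Qcar := qmk (gmul (qrep A) (qrep B)).
Definition qinv (A : Qcar) : Qcar := qmk (ginv (qrep A)).
Definition qone : Qcar := qmk gone.

Lemma mul_mk g h : qmul (qmk g) (qmk h) = qmk (gmul g h).
Proof.
  destruct HK as [[K1 [KM KV]] KC]. unfold qmul. apply qmk_eq.
  set (r := qrep (qmk g)). set (s := qrep (qmk h)).
  replace (gmul (ginv (gmul r s)) (gmul g h)) with
    (gmul (gmul (gmul (ginv s) (gmul (ginv r) g)) s) (gmul (ginv s) h)).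
  - apply KM. + apply KC. apply rep_mk. + apply rep_mk.
  - rewrite invM. repeat rewrite <- gmulA. now rewrite mulKV.
Qed.

Lemma inv_mk g : qinv (qmk g) = qmk (ginv g).
Proof.
  destruct HK as [[K1 [KM KV]] KC]. unfold qinv. apply qmk_eq.
  set (r := qrep (qmk g)).
  replace (gmul (ginv (ginv r)) (ginv g)) with
    (gmul (gmul (ginv (ginv r)) (ginv (gmul (ginv r) g))) (ginv r)).
  - apply KC. apply KV. apply rep_mk.
  - rewrite invM, !invK. repeat rewrite <- gmulA. now rewrite mulgVr, mulg1.
Qed.

Lemma qmulA A B C : qmul A (qmul B C) = qmul (qmul A B) C.
Proof.
  destruct (qmk_surj A) as [a ->]. destruct (qmk_surj B) as [b ->].
  destruct (qmk_surj C) as [c ->]. now rewrite !mul_mk, gmulA.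
Qed.

Lemma qmul1 A : qmul qone A = A.
Proof. destruct (qmk_surj A) as [a ->]. unfold qone. now rewrite mul_mk, gmul1. Qed.

Lemma qmulV A : qmul (qinv A) A = qone.
Proof.
  destruct (qmk_surj A) as [a ->]. unfold qone. now rewrite inv_mk, mul_mk, gmulV.
Qed.

Definition quot : grp := Grp qmulA qmul1 qmulV.

End Quotient.

Definition kerI (G F : grp) (P : (G -> F) -> Prop) (g : G) : Prop :=
  forall f : G -> F, is_hom f -> P f -> f g = gone.

Lemma kerI_normal (G F : grp) (P : (G -> F) -> Prop) : normal (kerI P).
Proof.
  unfold kerI. split; [split; [|split]|].
  - intros f Hf _. now apply hom1.
  - intros x y Hx Hy f Hf Pf. rewrite Hf, Hx, Hy; auto. apply gmul1.
  - intros x Hx f Hf Pf. rewrite homV, Hx; auto. apply inv1.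
  - intros g x Hx f Hf Pf. rewrite !Hf, homV, Hx; auto.
    rewrite mulg1. apply gmulV.
Qed.

Definition nonabelian (F : grp) : Prop :=
  exists a b : F, gmul a b <> gmul b a.

Definition na_image (G F : grp) (f : G -> F) : Prop :=
  exists a b : G, gmul (f a) (f b) <> gmul (f b) (f a).

Definition RF (F G : grp) : grp :=
  quot (kerI_normal (fun _ : G -> F => True)).
Definition RFna (F G : grp) : grp :=
  quot (kerI_normal (@na_image G F)).

Definition is_free_on (F : grp) (X : Type) (x : X -> F) : Prop :=
  forall (H : grp) (h : X -> H),
    exists phi : F -> H, is_hom phi /\ (forall i, phi (x i) = h i) /\
      (forall psi : F -> H, is_hom psi -> (forall i, psi (x i) = h i) ->
         forall w, psi w = phi w).

Definition is_free (F : grp) : Prop :=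
  exists (X : Type) (x : X -> F), is_free_on x.

Definition normal_closure (G : grp) (R : list G) (w : G) : Prop :=
  forall N : G -> Prop, normal N -> (forall r, In r R -> N r) -> N w.

(* H is finitely presented: H is isomorphic to F_n / <<R>> with R finite,
   i.e. there is a surjective hom from a free group of finite rank n onto H
   whose kernel is the normal closure of a finite set. *)
Definition fin_pres (H : grp) : Prop :=
  exists (n : nat) (F : grp) (x : {i : nat | i < n} -> F), is_free_on x /\
    exists phi : F -> H, is_hom phi /\ (forall y, exists w, phi w = y) /\
      exists R : list F, forall w, phi w = gone <-> normal_closure R w.

(** Write [K], [N] and [A] for the intersections of the kernels of all
    homomorphisms [G -> F], of those with non-abelian image, and of those
    with abelian image.  Since every homomorphism falls in one of the two
    classes, [K ⊆ N] and [N ∩ A = K]; moreover [G/A] is abelian, and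
    [[N, G] ⊆ K].  Hence the natural map [RF(G) = G/K -> G/N = RF_na(G)] is
    onto, and its kernel [N/K] is central and isomorphic to [NA/A], a
    subgroup of the finitely generated abelian group [G/A], hence finitely
    generated.  The theorem then follows from two general facts:
    - a quotient of a finitely presented group by a finitely generated
      normal subgroup is finitely presented ([quot_fin_pres]);
    - a central extension of a finitely presented group by a finitely
      generated group is finitely presented ([central_ext_fin_pres]). *)

From Stdlib Require Import List ZArith Lia Wf_nat ClassicalEpsilon Classical
  FunctionalExtensionality PropExtensionality ProofIrrelevance.
Set Implicit Arguments.
Unset Strict Implicit.

Lemma inv_uniq_r (G : grp) (x y : G) : gmul x y = gone -> y = ginv x.
Proof. intro E. rewrite <- (gmul1 y), <- (gmulV x), <- gmulA, E. apply mulg1. Qed.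

Lemma eq_of_div (G : grp) (x y : G) : gmul (ginv x) y = gone -> x = y.
Proof. intro E. rewrite <- (mulKV x y), E. symmetry. apply mulg1. Qed.

Lemma mulg_cancel_r (G : grp) (a x y : G) : gmul x a = gmul y a -> x = y.
Proof.
  intro E. rewrite <- (mulg1 x), <- (mulgVr a), gmulA, E, <- gmulA, mulgVr.
  apply mulg1.
Qed.

Lemma mul_swap_mid (G : grp) (y1 p1 y2 p2 : G) : gmul p1 y2 = gmul y2 p1 ->
  gmul (gmul y1 p1) (gmul y2 p2) = gmul (gmul y1 y2) (gmul p1 p2).
Proof. intro E. rewrite <- !gmulA. f_equal. rewrite !gmulA, E. reflexivity. Qed.

Lemma hom_comp (H1 H2 H3 : grp) (f : H2 -> H3) (g : H1 -> H2) :
  is_hom f -> is_hom g -> is_hom (fun x => f (g x)).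
Proof. intros Hf Hg x y. now rewrite Hg, Hf. Qed.

Definition cent (H : grp) (y : H) (x : H) : Prop := gmul x y = gmul y x.

Lemma cent_sub (H : grp) (y : H) : subgroup (cent y).
Proof.
  unfold cent. split; [|split].
  - now rewrite gmul1, mulg1.
  - intros a b Ha Hb. now rewrite <- gmulA, Hb, gmulA, Ha, <- gmulA.
  - intros a Ha. rewrite <- (mulVK a (gmul y (ginv a))), (gmulA a y), Ha,
      <- gmulA, mulgVr, mulg1. reflexivity.
Qed.

Lemma cent_sym (H : grp) (x y : H) : cent x y -> cent y x.
Proof. unfold cent. auto. Qed.

Lemma sub_inter (H : grp) (S T : H -> Prop) :
  subgroup S -> subgroup T -> subgroup (fun x => S x /\ T x).
Proof.
  intros [S1 [SM SV]] [T1 [TM TV]]. split; [|split]; auto.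
  - intros x y [? ?] [? ?]; auto.
  - intros x [? ?]; auto.
Qed.

Lemma kernel_normal (H H' : grp) (f : H -> H') :
  is_hom f -> normal (fun x => f x = gone).
Proof.
  intro Hf. split; [split; [|split]|].
  - now apply hom1.
  - intros x y Hx Hy. now rewrite Hf, Hx, Hy, gmul1.
  - intros x Hx. now rewrite homV, Hx, inv1.
  - intros g x Hx. rewrite !Hf, homV, Hx, mulg1 by auto. apply gmulV.
Qed.

Lemma preim_sub (H H' : grp) (f : H -> H') (T : H' -> Prop) :
  is_hom f -> subgroup T -> subgroup (fun w => T (f w)).
Proof.
  intros Hf [T1 [TM TV]]. split; [|split].
  - now rewrite hom1.
  - intros x y Hx Hy. rewrite Hf. auto.
  - intros x Hx. rewrite homV; auto.
Qed.

Lemma image_normal (H H' : grp) (f : H -> H') (M : H -> Prop) :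
  is_hom f -> (forall y, exists x, f x = y) -> normal M ->
  normal (fun q => exists w, M w /\ f w = q).
Proof.
  intros Hf Sf [[M1 [MM MV]] MC]. split; [split; [|split]|].
  - exists gone. split; auto. now apply hom1.
  - intros a b [w1 [H1 <-]] [w2 [H2 <-]]. exists (gmul w1 w2). split; auto.
  - intros a [w1 [H1 <-]]. exists (ginv w1). split; auto. now apply homV.
  - intros g a [w1 [H1 <-]]. destruct (Sf g) as [g' <-].
    exists (gmul (gmul (ginv g') w1) g'). split; auto. now rewrite !Hf, homV.
Qed.

Definition gen (H : grp) (P : H -> Prop) (x : H) : Prop :=
  forall T, subgroup T -> (forall y, P y -> T y) -> T x.
Definition ngen (H : grp) (P : H -> Prop) (x : H) : Prop :=
  forall T, normal T -> (forall y, P y -> T y) -> T x.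
Definition in_list (A : Type) (L : list A) (y : A) : Prop := In y L.

Lemma gen_sub (H : grp) (P : H -> Prop) : subgroup (gen P).
Proof.
  split; [|split].
  - intros T [? _] _. auto.
  - intros x y Hx Hy T HT HP. specialize (Hx T HT HP). specialize (Hy T HT HP).
    apply HT; auto.
  - intros x Hx T HT HP. specialize (Hx T HT HP). apply HT; auto.
Qed.

Lemma gen_incl (H : grp) (P : H -> Prop) y : P y -> gen P y.
Proof. intros Hy T _ HP. auto. Qed.

Lemma gen_mono (H : grp) (P Q : H -> Prop) :
  (forall y, P y -> Q y) -> forall y, gen P y -> gen Q y.
Proof. intros PQ y Hy T HT HQ. apply Hy; auto. Qed.

Lemma ngen_normal (H : grp) (P : H -> Prop) : normal (ngen P).
Proof.
  split; [split; [|split]|].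
  - intros T [[? _] _] _. auto.
  - intros x y Hx Hy T HT HP. specialize (Hx T HT HP). specialize (Hy T HT HP).
    apply HT; auto.
  - intros x Hx T HT HP. specialize (Hx T HT HP). apply HT; auto.
  - intros g x Hx T HT HP. specialize (Hx T HT HP). apply HT; auto.
Qed.

Lemma ngen_incl (H : grp) (P : H -> Prop) y : P y -> ngen P y.
Proof. intros Hy T _ HP. auto. Qed.

Lemma ngen_mono (H : grp) (P Q : H -> Prop) :
  (forall y, P y -> Q y) -> forall y, ngen P y -> ngen Q y.
Proof. intros PQ y Hy T HT HQ. apply Hy; auto. Qed.

Lemma gen_ngen (H : grp) (P : H -> Prop) y : gen P y -> ngen P y.
Proof. intros Hy T HT HP. apply Hy; auto. apply HT. Qed.

Lemma gen_image (H H' : grp) (f : H -> H') (P : H -> Prop) (Q : H' -> Prop) :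
  is_hom f -> (forall y, P y -> Q (f y)) -> forall y, gen P y -> gen Q (f y).
Proof.
  intros Hf PQ y Hy. apply (Hy (fun z => gen Q (f z))).
  - apply preim_sub; auto. apply gen_sub.
  - intros z Hz. apply gen_incl; auto.
Qed.

Lemma gen_lift (H H' : grp) (f : H -> H') (P : H -> Prop) (Q : H' -> Prop) :
  is_hom f -> (forall z, Q z -> exists y, P y /\ f y = z) ->
  forall z, gen Q z -> exists y, gen P y /\ f y = z.
Proof.
  intros Hf PQ z Hz. apply (Hz (fun z => exists y, gen P y /\ f y = z)).
  - split; [|split].
    + exists gone. split; [apply gen_sub | now apply hom1].
    + intros a b [y1 [H1 <-]] [y2 [H2 <-]]. exists (gmul y1 y2).
      split; [apply gen_sub; auto | apply Hf].
    + intros a [y1 [H1 <-]]. exists (ginv y1).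
      split; [apply gen_sub; auto | now apply homV].
  - intros w Hw. destruct (PQ w Hw) as [y [Py E]]. exists y.
    split; [now apply gen_incl | exact E].
Qed.

Fixpoint npow (H : grp) (a : H) (n : nat) : H :=
  match n with O => gone | S n => gmul (npow a n) a end.

Section IntegerPowers.
Local Open Scope Z_scope.
Variable H : grp.
Implicit Types a b : H.

Definition zpow a (e : Z) : H :=
  if Z_le_dec 0 e then npow a (Z.to_nat e) else npow (ginv a) (Z.to_nat (- e)).

Lemma zpow0 a : zpow a 0 = gone.
Proof. reflexivity. Qed.

Lemma zpow_succ a e : zpow a (e + 1) = gmul (zpow a e) a.
Proof.
  unfold zpow.
  destruct (Z_le_dec 0 (e + 1)) as [h1|h1]; destruct (Z_le_dec 0 e) as [h2|h2].
  - replace (Z.to_nat (e + 1)) with (S (Z.to_nat e)) by lia. reflexivity.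
  - assert (e = -1) by lia. subst. simpl. rewrite gmul1, gmulV. reflexivity.
  - lia.
  - replace (Z.to_nat (- e)) with (S (Z.to_nat (- (e + 1)))) by lia. simpl.
    rewrite <- gmulA, gmulV, mulg1. reflexivity.
Qed.

(** [zpow c] is the only map [Z -> H] sending [0] to [1] and [t + 1] to
    [f t * c]; all exponent laws below are instances of this. *)
Lemma zpow_unique (f : Z -> H) c :
  f 0 = gone -> (forall t, f (t + 1) = gmul (f t) c) -> forall t, f t = zpow c t.
Proof.
  intros F0 FS. apply Z.peano_ind.
  - exact F0.
  - intros t IH. rewrite <- Z.add_1_r, FS, zpow_succ, IH. reflexivity.
  - intros t IH. apply mulg_cancel_r with (a := c).
    rewrite <- zpow_succ, <- FS, Z.add_1_r, Z.succ_pred. exact IH.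
Qed.

Lemma zpow_add a e f : zpow a (e + f) = gmul (zpow a e) (zpow a f).
Proof.
  assert (E : forall t, gmul (ginv (zpow a e)) (zpow a (e + t)) = zpow a t).
  { apply zpow_unique.
    - rewrite Z.add_0_r. apply gmulV.
    - intro t. rewrite Z.add_assoc, zpow_succ. apply gmulA. }
  rewrite <- (E f). symmetry. apply mulKV.
Qed.

Lemma zpow1 a : zpow a 1 = a.
Proof. rewrite <- (Z.add_0_l 1), zpow_succ. apply gmul1. Qed.

Lemma zpow_opp a e : zpow a (- e) = ginv (zpow a e).
Proof. apply inv_uniq_r. rewrite <- zpow_add, Z.add_opp_diag_r. apply zpow0. Qed.

Lemma zpow_mul a d t : zpow a (d * t) = zpow (zpow a d) t.
Proof.
  revert t. apply zpow_unique with (f := fun t => zpow a (d * t)).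
  - now rewrite Z.mul_0_r.
  - intro s. now rewrite Z.mul_add_distr_l, Z.mul_1_r, zpow_add.
Qed.

Lemma zpow_in (T : H -> Prop) a : subgroup T -> T a -> forall e, T (zpow a e).
Proof.
  intros [T1 [TM TV]] Ta e.
  assert (N : forall b, T b -> forall n, T (npow b n)).
  { intros b Tb n. induction n; simpl; auto. }
  unfold zpow. destruct (Z_le_dec 0 e); apply N; auto.
Qed.

Lemma zpow_cent a b e : cent a b -> cent a (zpow b e).
Proof. intro Hb. apply zpow_in; auto. apply cent_sub. Qed.

Lemma zpow_mul_comm a b t :
  cent a b -> zpow (gmul a b) t = gmul (zpow a t) (zpow b t).
Proof.
  intro Hab. symmetry. revert t.
  apply zpow_unique with (f := fun t => gmul (zpow a t) (zpow b t)).
  - apply gmul1.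
  - intro s. rewrite !zpow_succ. apply mul_swap_mid. symmetry. now apply zpow_cent.
Qed.

End IntegerPowers.

(** * Finitely generated abelian groups are noetherian *)

Lemma Z_subgroup_cyclic (E : Z -> Prop) :
  E 0%Z -> (forall x y, E x -> E y -> E (x + y)%Z) -> (forall x, E x -> E (- x)%Z) ->
  (forall x, E x -> x = 0%Z) \/
  exists d, (0 < d)%Z /\ E d /\ forall x, E x -> exists t, x = (d * t)%Z.
Proof.
  intros E0 EA EN.
  destruct (classic (exists x, E x /\ x <> 0%Z)) as [[x [Ex Hx]]|Hno].
  2:{ left. intros x Ex. apply NNPP. intro. apply Hno. eauto. }
  right.
  set (Pos := fun n : nat => (0 < n)%nat /\ E (Z.of_nat n)).
  assert (Ex' : exists n, Pos n).
  { destruct (Z_le_dec 0 x).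
    - exists (Z.to_nat x). split; [lia | now rewrite Z2Nat.id].
    - exists (Z.to_nat (- x)). split; [lia | rewrite Z2Nat.id by lia; auto]. }
  destruct (dec_inh_nat_subset_has_unique_least_element Pos (fun n => classic (Pos n)) Ex')
    as [n [[[Hn En] Hmin] _]].
  set (d := Z.of_nat n) in *.
  assert (Emul : forall t, E (d * t)%Z).
  { apply Z.peano_ind.
    - now rewrite Z.mul_0_r.
    - intros t IH. replace (d * Z.succ t)%Z with (d * t + d)%Z by lia. auto.
    - intros t IH. replace (d * Z.pred t)%Z with (d * t + - d)%Z by lia. auto. }
  exists d. split; [lia | split; [exact En |]].
  intros y Ey. exists (y / d)%Z.
  pose proof (Z.div_mod y d ltac:(lia)) as Hdiv.
  pose proof (Z.mod_pos_bound y d ltac:(lia)) as Hbound.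
  assert (Er : E (y mod d)%Z).
  { replace (y mod d)%Z with (y + - (d * (y / d)))%Z by lia. auto. }
  destruct (Z.eq_dec (y mod d) 0) as [Hr0|Hr0]; [lia|].
  assert (n <= Z.to_nat (y mod d))%nat.
  { apply Hmin. split; [lia | rewrite Z2Nat.id; [exact Er | lia]]. }
  lia.
Qed.

Lemma decomp_mul (H : grp) (a y1 y2 : H) e1 e2 : cent a y2 ->
  gmul (gmul y1 (zpow a e1)) (gmul y2 (zpow a e2)) =
  gmul (gmul y1 y2) (zpow a (e1 + e2)).
Proof.
  intro Ha. rewrite zpow_add. apply mul_swap_mid. apply zpow_cent, cent_sym, Ha.
Qed.

Lemma decomp_inv (H : grp) (a y : H) e : cent a y ->
  ginv (gmul y (zpow a e)) = gmul (ginv y) (zpow a (- e)).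
Proof.
  intro Ha. rewrite invM, <- zpow_opp.
  apply zpow_cent, cent_sym, (proj2 (proj2 (cent_sub a))), Ha.
Qed.

Lemma gen_cons_decomp (H : grp) (a : H) (L : list H) :
  (forall y, gen (in_list L) y -> cent a y) ->
  forall x, gen (in_list (a :: L)) x ->
  exists y e, gen (in_list L) y /\ x = gmul y (zpow a e).
Proof.
  intros Ha x Hx. apply Hx.
  - split; [|split].
    + exists gone, 0%Z. split; [apply gen_sub | now rewrite zpow0, gmul1].
    + intros x1 x2 [y1 [e1 [G1 ->]]] [y2 [e2 [G2 ->]]].
      exists (gmul y1 y2), (e1 + e2)%Z.
      split; [apply gen_sub; auto | apply decomp_mul, Ha, G2].
    + intros x1 [y1 [e1 [G1 ->]]]. exists (ginv y1), (- e1)%Z.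
      split; [apply gen_sub; auto | apply decomp_inv, Ha, G1].
  - intros z [<-|Hz].
    + exists gone, 1%Z. split; [apply gen_sub | now rewrite zpow1, gmul1].
    + exists z, 0%Z. split; [now apply gen_incl | now rewrite zpow0, mulg1].
Qed.

Lemma gen_nil (H : grp) (x : H) : gen (in_list nil) x -> x = gone.
Proof.
  intro Hx. apply Hx; [| intros y []].
  split; [|split]; [reflexivity | intros ? ? -> ->; apply gmul1 | intros ? ->; apply inv1].
Qed.

Definition exponents (H : grp) (a : H) (L : list H) (S : H -> Prop) (e : Z) : Prop :=
  exists y, gen (in_list L) y /\ S (gmul y (zpow a e)).

Lemma exponents_cyclic (H : grp) (a : H) (L : list H) (S : H -> Prop) :
  subgroup S -> (forall y, gen (in_list L) y -> cent a y) ->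
  (forall e, exponents a L S e -> e = 0%Z) \/
  exists d, (0 < d)%Z /\ exponents a L S d /\
            forall e, exponents a L S e -> exists t, e = (d * t)%Z.
Proof.
  intros HS Ha. apply Z_subgroup_cyclic.
  - exists gone. split; [apply gen_sub | rewrite zpow0, gmul1; apply HS].
  - intros e1 e2 [y1 [G1 S1]] [y2 [G2 S2]]. exists (gmul y1 y2).
    split; [apply gen_sub; auto |]. rewrite <- decomp_mul by auto. apply HS; auto.
  - intros e [y [Gy Sy]]. exists (ginv y).
    split; [apply gen_sub; auto |]. rewrite <- decomp_inv by auto. apply HS; auto.
Qed.

Lemma decomp_shift (H : grp) (a y y0 : H) d t : cent a y0 ->
  gmul y (zpow a (d * t)) =
  gmul (gmul y (ginv (zpow y0 t))) (zpow (gmul y0 (zpow a d)) t).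
Proof.
  intro Ha. rewrite zpow_mul_comm, <- zpow_mul, <- gmulA, mulVK
    by (apply zpow_cent, cent_sym, Ha). reflexivity.
Qed.

(** Induction on
    the list: for [a :: L], [S ∩ <L>] is finitely generated, and if [d] generates
    the exponents of [a] in [S], one element [y0 * a^d] of [S] is added. *)
Lemma abelian_sub_fin_gen (H : grp) (L : list H) :
  (forall a b, In a L -> In b L -> gmul a b = gmul b a) ->
  forall S, subgroup S -> (forall x, S x -> gen (in_list L) x) ->
  exists L', (forall y, In y L' -> S y) /\ forall x, S x -> gen (in_list L') x.
Proof.
  induction L as [|a L IH]; intros Hc S HS Hsub.
  - exists nil. split; [intros y [] |]. intros x Sx.
    rewrite (gen_nil (Hsub x Sx)). apply gen_sub.
  - assert (HcL : forall a b, In a L -> In b L -> gmul a b = gmul b a)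
      by (intros; apply Hc; simpl; auto).
    assert (Ha : forall y, gen (in_list L) y -> cent a y).
    { intros y Hy. apply Hy; [apply cent_sub |]. intros z Hz. apply Hc; simpl; auto. }
    destruct (IH HcL (fun x => S x /\ gen (in_list L) x) (sub_inter HS (gen_sub _))
                (fun x Hx => proj2 Hx)) as [L0 [HL0S HL0gen]].
    destruct (exponents_cyclic HS Ha) as [Hz | [d [_ [[y0 [G0 S0]] Hmul]]]].
    + exists L0. split; [intros y Hy; exact (proj1 (HL0S y Hy)) |].
      intros x Sx. destruct (gen_cons_decomp Ha (Hsub x Sx)) as [y [e [Gy ->]]].
      assert (e = 0%Z) as -> by (apply Hz; exists y; auto).
      rewrite zpow0, mulg1 in *. apply HL0gen. auto.
    + set (s0 := gmul y0 (zpow a d)).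
      exists (s0 :: L0). split; [intros y [<-|Hy]; [exact S0 | exact (proj1 (HL0S y Hy))] |].
      intros x Sx. destruct (gen_cons_decomp Ha (Hsub x Sx)) as [y [e [Gy ->]]].
      destruct (Hmul e (ex_intro _ y (conj Gy Sx))) as [t ->].
      rewrite (decomp_shift y d t (Ha y0 G0)) in *.
      set (u := gmul y (ginv (zpow y0 t))) in *.
      assert (Ss0 : S (zpow s0 t)) by (apply zpow_in; auto).
      assert (Su : S u).
      { rewrite <- (mulg1 u), <- (mulgVr (zpow s0 t)), gmulA. apply HS; auto. apply HS, Ss0. }
      apply gen_sub.
      * apply (gen_mono (P := in_list L0)); [intros z Hz; right; exact Hz |].
        apply HL0gen. split; [exact Su | apply gen_sub; auto; apply gen_sub].
        apply zpow_in; [apply gen_sub | exact G0].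
      * apply zpow_in; [apply gen_sub | apply gen_incl; left; reflexivity].
Qed.

(** * Free groups *)

Section SubGroup.
Variable H : grp.
Variable S : H -> Prop.
Hypothesis HS : subgroup S.

Definition Scar := {y : H | S y}.
Definition smul (a b : Scar) : Scar :=
  exist _ (gmul (proj1_sig a) (proj1_sig b))
    (proj1 (proj2 HS) _ _ (proj2_sig a) (proj2_sig b)).
Definition sinv (a : Scar) : Scar :=
  exist _ (ginv (proj1_sig a)) (proj2 (proj2 HS) _ (proj2_sig a)).
Definition sone : Scar := exist _ gone (proj1 HS).

Lemma smulA a b c : smul a (smul b c) = smul (smul a b) c.
Proof. apply subset_eq_compat. apply gmulA. Qed.
Lemma smul1 a : smul sone a = a.
Proof. destruct a. apply subset_eq_compat. apply gmul1. Qed.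
Lemma smulV a : smul (sinv a) a = sone.
Proof. apply subset_eq_compat. apply gmulV. Qed.

Definition subgrp : grp := Grp smulA smul1 smulV.
End SubGroup.

Lemma free_unique (F : grp) (X : Type) (x : X -> F) (H : grp) (p1 p2 : F -> H) :
  is_free_on x -> is_hom p1 -> is_hom p2 -> (forall i, p1 (x i) = p2 (x i)) ->
  forall w, p1 w = p2 w.
Proof.
  intros Hx H1 H2 E w. destruct (Hx H (fun i => p2 (x i))) as [phi [_ [_ U]]].
  rewrite (U p1 H1 E), (U p2 H2 (fun i => eq_refl)). reflexivity.
Qed.

Lemma free_gen (F : grp) (X : Type) (x : X -> F) :
  is_free_on x -> forall S, subgroup S -> (forall i, S (x i)) -> forall w, S w.
Proof.
  intros Hx S HS Sx w.
  destruct (Hx (subgrp HS) (fun i => exist _ (x i) (Sx i))) as [phi [Hphi [Ephi _]]].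
  assert (E : forall w, proj1_sig (phi w) = w).
  { apply (free_unique (p1 := fun w => proj1_sig (phi w)) (p2 := fun w => w) Hx).
    - intros a b. rewrite Hphi. reflexivity.
    - intros a b. reflexivity.
    - intro i. rewrite Ephi. reflexivity. }
  rewrite <- E. apply proj2_sig.
Qed.

(** The free group on a type [X]: words in [X] and its inverses, identified
    when they evaluate equally in every group. *)
Section FreeGroup.
Variable X : Type.

Definition word := list (X * bool).
Definition evl (H : grp) (h : X -> H) (l : X * bool) : H :=
  if snd l then h (fst l) else ginv (h (fst l)).
Fixpoint ev (H : grp) (h : X -> H) (w : word) : H :=
  match w with nil => gone | l :: w => gmul (evl h l) (ev h w) end.
Definition winv (w : word) : word := rev (map (fun l => (fst l, negb (snd l))) w).

Lemma ev_app (H : grp) (h : X -> H) w1 w2 : ev h (w1 ++ w2) = gmul (ev h w1) (ev h w2).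
Proof. induction w1; simpl. now rewrite gmul1. now rewrite IHw1, gmulA. Qed.

Lemma ev_winv (H : grp) (h : X -> H) w : ev h (winv w) = ginv (ev h w).
Proof.
  induction w as [|[a b] w IH]; simpl. now rewrite inv1.
  unfold winv in *. simpl. rewrite ev_app, IH, invM. simpl. rewrite mulg1. f_equal.
  unfold evl; destruct b; simpl; auto. now rewrite invK.
Qed.

Definition weq (w v : word) : Prop := forall (H : grp) (h : X -> H), ev h w = ev h v.
Definition FCar := {P : word -> Prop | exists w, P = weq w}.
Definition fmk (w : word) : FCar := exist _ (weq w) (ex_intro _ w eq_refl).
Definition frep (c : FCar) : word :=
  proj1_sig (constructive_indefinite_description _ (proj2_sig c)).

Lemma frep_spec c : proj1_sig c = weq (frep c).
Proof.
  exact (proj2_sig (constructive_indefinite_description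
                      (fun w => proj1_sig c = weq w) (proj2_sig c))).
Qed.

Lemma fmk_eq w v : weq w v -> fmk w = fmk v.
Proof.
  intro E. unfold fmk. apply subset_eq_compat. apply functional_extensionality; intro u.
  apply propositional_extensionality. unfold weq in *. split; intros E' H h.
  - rewrite <- E. auto.
  - rewrite E. auto.
Qed.

Lemma fmk_surj c : exists w, c = fmk w.
Proof.
  exists (frep c). destruct c as [P HP]. unfold fmk. apply subset_eq_compat.
  exact (frep_spec (exist _ P HP)).
Qed.

Lemma ev_rep (H : grp) (h : X -> H) w : ev h (frep (fmk w)) = ev h w.
Proof.
  pose proof (frep_spec (fmk w)) as E. simpl in E.
  assert (Ew : weq w w) by (intros ? ?; reflexivity).
  rewrite E in Ew. apply Ew.
Qed.

Definition fmul (c d : FCar) : FCar := fmk (frep c ++ frep d).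
Definition finv (c : FCar) : FCar := fmk (winv (frep c)).
Definition fone : FCar := fmk nil.

Lemma fmul_mk a b : fmul (fmk a) (fmk b) = fmk (a ++ b).
Proof. apply fmk_eq. intros H h. now rewrite !ev_app, !ev_rep. Qed.
Lemma finv_mk a : finv (fmk a) = fmk (winv a).
Proof. apply fmk_eq. intros H h. now rewrite !ev_winv, !ev_rep. Qed.

Lemma fmulA a b c : fmul a (fmul b c) = fmul (fmul a b) c.
Proof.
  destruct (fmk_surj a) as [a' ->]. destruct (fmk_surj b) as [b' ->].
  destruct (fmk_surj c) as [c' ->]. now rewrite !fmul_mk, app_assoc.
Qed.
Lemma fmul1 a : fmul fone a = a.
Proof. destruct (fmk_surj a) as [a' ->]. unfold fone. now rewrite fmul_mk. Qed.
Lemma fmulV a : fmul (finv a) a = fone.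
Proof.
  destruct (fmk_surj a) as [a' ->]. rewrite finv_mk, fmul_mk. apply fmk_eq.
  intros H h. rewrite ev_app, ev_winv. apply gmulV.
Qed.

Definition FG : grp := Grp fmulA fmul1 fmulV.
Definition fgen (i : X) : FG := fmk ((i, true) :: nil).

Definition flift (H : grp) (h : X -> H) (c : FG) : H := ev h (frep c).

Lemma flift_hom (H : grp) (h : X -> H) : is_hom (flift h).
Proof. intros c d. unfold flift. simpl. unfold fmul. rewrite ev_rep, ev_app. reflexivity. Qed.

Lemma flift_gen (H : grp) (h : X -> H) i : flift h (fgen i) = h i.
Proof. unfold flift, fgen. rewrite ev_rep. apply mulg1. Qed.

Lemma FG_free : is_free_on fgen.
Proof.
  intros H h. exists (flift h). split; [apply flift_hom | split; [apply flift_gen |]].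
  intros psi Hpsi Epsi c. destruct (fmk_surj c) as [w ->]. unfold flift. rewrite ev_rep.
  induction w as [|[a b] w IH].
  - apply (hom1 Hpsi).
  - assert (E : fmk ((a, b) :: w) = @gmul FG (fmk ((a, b) :: nil)) (fmk w))
      by (simpl; rewrite fmul_mk; reflexivity).
    rewrite E, Hpsi, IH. simpl. f_equal. unfold evl. simpl. destruct b.
    + apply Epsi.
    + assert (E2 : fmk ((a, false) :: nil) = @ginv FG (fgen a)).
      { simpl. unfold fgen. rewrite finv_mk. apply fmk_eq. intros H' h'. reflexivity. }
      rewrite E2, homV by auto. now rewrite Epsi.
Qed.
End FreeGroup.

(** Basis elements of the free group on [{j | j < m}], indexed by [nat]
    (indices [i >= m] give the unit). *)
Definition fgen_nat (m i : nat) : FG {j : nat | j < m} :=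
  match lt_dec i m with
  | left p => fgen (exist (fun j => j < m) i p)
  | right _ => gone
  end.

Lemma fgen_nat_fgen m (i : {j : nat | j < m}) : fgen_nat m (proj1_sig i) = fgen i.
Proof.
  destruct i as [i p]. unfold fgen_nat. simpl. destruct (lt_dec i m) as [l|l].
  - do 2 f_equal. apply proof_irrelevance.
  - contradiction.
Qed.

Lemma flift_nat (H : grp) m (h : nat -> H) i :
  i < m -> flift (fun j : {j : nat | j < m} => h (proj1_sig j)) (fgen_nat m i) = h i.
Proof.
  intro Hi. pose proof (fgen_nat_fgen (exist (fun j => j < m) i Hi)) as E. simpl in E.
  rewrite E. apply flift_gen.
Qed.

Section QuotientMap.
Variable G : grp.
Variable K : G -> Prop.
Hypothesis HK : normal K.

Lemma qmk_hom : @is_hom G (quot HK) (qmk K).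
Proof. intros g h. symmetry. exact (mul_mk HK g h). Qed.

Lemma qmk_surjective (q : quot HK) : exists g, qmk K g = q.
Proof. destruct (qmk_surj q) as [g ->]. eauto. Qed.

Lemma qmk_eq_div g h : qmk K g = qmk K h -> K (gmul (ginv g) h).
Proof.
  intro E. apply (f_equal (@proj1_sig _ _)) in E. simpl in E.
  assert (Hh : cls K h h) by (unfold cls; rewrite gmulV; apply HK).
  rewrite <- E in Hh. exact Hh.
Qed.

Lemma qmk_one g : @qmk G K g = @gone (quot HK) <-> K g.
Proof.
  split; intro Hg.
  - apply qmk_eq_div in Hg. destruct HK as [[K1 [KM KV]] _].
    replace g with (ginv (gmul (ginv g) gone)) by now rewrite mulg1, invK. auto.
  - simpl. unfold qone. symmetry. apply (qmk_eq HK). rewrite inv1, gmul1. exact Hg.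
Qed.

Definition qlift (H : grp) (f : G -> H) (q : quot HK) : H := f (qrep q).

Section Lift.
Variables (H : grp) (f : G -> H).
Hypotheses (Hf : is_hom f) (HfK : forall g, K g -> f g = gone).

Lemma qlift_mk g : qlift f (qmk K g) = f g.
Proof.
  unfold qlift. apply eq_of_div. rewrite <- homV, <- Hf by exact Hf.
  apply HfK, (rep_mk HK).
Qed.

Lemma qlift_hom : is_hom (qlift f).
Proof.
  intros p q. destruct (qmk_surj p) as [g ->]. destruct (qmk_surj q) as [h ->].
  rewrite <- qmk_hom, !qlift_mk. apply Hf.
Qed.
End Lift.
End QuotientMap.

(** * Finite presentability of quotients *)

(** If [pi : P -> P'] is onto with kernel generated by a finite list, a
    presentation of [P] together with lifts of that list presents [P']. *)
Lemma quot_fin_pres (P P' : grp) (pi : P -> P') (Lc : list P) :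
  is_hom pi -> (forall y, exists x, pi x = y) ->
  (forall c, pi c = gone <-> gen (in_list Lc) c) -> fin_pres P -> fin_pres P'.
Proof.
  intros Hpi Spi Hker [n [Fn [x [Hx [phi [Hphi [Sphi [R HR]]]]]]]].
  set (lift := fun c => epsilon (inhabits (@gone Fn)) (fun w => phi w = c)).
  assert (Hlift : forall c, phi (lift c) = c)
    by (intro c; apply (epsilon_spec (inhabits gone) (fun w => phi w = c)), Sphi).
  set (R' := R ++ map lift Lc).
  exists n, Fn, x. split; [exact Hx |]. exists (fun w => pi (phi w)).
  split; [apply hom_comp; auto | split].
  - intro y. destruct (Spi y) as [z <-]. destruct (Sphi z) as [w <-]. eauto.
  - exists R'. intro w. split.
    + (* [w = u * (u^-1 w)] with [u] a word in the lifts and [u^-1 w] in [<<R>>] *)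
      intro Hw. apply Hker in Hw.
      destruct (gen_lift (P := in_list (map lift Lc)) (Q := in_list Lc) Hphi) with (z := phi w)
        as [u [Gu Eu]]; auto.
      { intros z Hz. exists (lift z). split; auto. apply in_map; auto. }
      assert (N1 : ngen (in_list R') (gmul (ginv u) w)).
      { apply (ngen_mono (P := in_list R)); [intros y Hy; apply in_or_app; auto |].
        apply HR. rewrite Hphi, homV, Eu by auto. apply gmulV. }
      assert (N2 : ngen (in_list R') u).
      { apply gen_ngen. apply (gen_mono (P := in_list (map lift Lc))); auto.
        intros y Hy. apply in_or_app; auto. }
      change (ngen (in_list R') w). rewrite <- (mulKV u w). apply ngen_normal; auto.
    + intro Hw. apply (Hw (fun w => pi (phi w) = gone)).
      * apply kernel_normal, hom_comp; auto.
      * intros r Hr. apply in_app_or in Hr. destruct Hr as [Hr|Hr].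
        -- assert (phi r = gone) as -> by (apply HR; intros T _ HT; auto).
           apply (hom1 Hpi).
        -- apply in_map_iff in Hr. destruct Hr as [c [<- Hc]].
           rewrite Hlift. apply Hker, gen_incl, Hc.
Qed.

(** * Central extensions *)

Lemma mul_central_sub (Q Fn : grp) (j : Fn -> Q) (C : Q -> Prop) :
  is_hom j -> subgroup C -> (forall c q, C c -> gmul c q = gmul q c) ->
  subgroup (fun q => exists v c, C c /\ q = gmul (j v) c).
Proof.
  intros Hj HC Ccen. split; [|split].
  - exists gone, gone. split; [apply HC |]. rewrite (hom1 Hj). symmetry. apply gmul1.
  - intros q1 q2 [v1 [c1 [C1 ->]]] [v2 [c2 [C2 ->]]].
    exists (gmul v1 v2), (gmul c1 c2). split; [apply HC; auto |].
    rewrite Hj. apply mul_swap_mid, Ccen, C1.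
  - intros q [v [c [Cc ->]]]. exists (ginv v), (ginv c).
    split; [apply HC; auto |]. rewrite (homV _ Hj), invM. apply Ccen, HC, Cc.
Qed.

Section CentralKernel.
Variables (Q P P' Fn : grp) (Phi0 : Q -> P) (pi : P -> P') (psi : Fn -> P').
Variables (j : Fn -> Q) (C B : Q -> Prop) (R : list Fn).
Hypotheses (HPhi0 : is_hom Phi0) (Hpi : is_hom pi) (Hj : is_hom j).
Hypothesis HR : forall v, psi v = gone -> normal_closure R v.
Hypothesis Hjpsi : forall v, pi (Phi0 (j v)) = psi v.
Hypotheses (HC : subgroup C) (Ccen : forall c q, C c -> gmul c q = gmul q c).
Hypothesis Cker : forall c, C c -> pi (Phi0 c) = gone.
Hypotheses (HB : normal B) (BPhi0 : forall q, B q -> Phi0 q = gone).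
Hypothesis Hdecomp : forall q, exists v c, C c /\ q = gmul (j v) c.
Hypothesis Hrel : forall r, In r R -> exists c, C c /\ B (gmul (ginv c) (j r)).
Hypothesis HCB : forall c, C c -> Phi0 c = gone -> B c.

Lemma consequence_central v :
  normal_closure R v -> exists c, C c /\ B (gmul (ginv c) (j v)).
Proof.
  destruct HB as [[B1 [BM BV]] BC].
  assert (Cinv : forall c q, C c -> gmul (ginv c) q = gmul q (ginv c))
    by (intros c q Cc; apply Ccen, HC, Cc).
  intro Hv. apply Hv; [split; [split; [|split]|] | exact Hrel].
  - exists gone. split; [apply HC |]. rewrite inv1, gmul1, (hom1 Hj). exact B1.
  - intros v1 v2 [c1 [C1 B1']] [c2 [C2 B2']]. exists (gmul c1 c2).
    split; [apply HC; auto |].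
    replace (gmul (ginv (gmul c1 c2)) (j (gmul v1 v2)))
      with (gmul (gmul (ginv c1) (j v1)) (gmul (ginv c2) (j v2))); [auto |].
    rewrite Hj, invM, (Cinv c2 (ginv c1)), <- !gmulA by exact C2. f_equal.
    rewrite !gmulA. f_equal. symmetry. apply Cinv, C2.
  - intros v1 [c1 [C1 B1']]. exists (ginv c1). split; [apply HC; auto |].
    rewrite invK, (homV _ Hj).
    replace (gmul c1 (ginv (j v1))) with (ginv (gmul (ginv c1) (j v1))); [auto |].
    rewrite invM, invK. symmetry. apply Ccen, C1.
  - intros g v1 [c1 [C1 B1']]. exists c1. split; [exact C1 |].
    rewrite !Hj, (homV _ Hj).
    replace (gmul (ginv c1) (gmul (gmul (ginv (j g)) (j v1)) (j g)))
      with (gmul (gmul (ginv (j g)) (gmul (ginv c1) (j v1))) (j g)); [auto |].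
    rewrite (gmulA (ginv (j g))), <- (Cinv c1 (ginv (j g)) C1), <- !gmulA.
    reflexivity.
Qed.

Lemma central_kernel q : Phi0 q = gone -> B q.
Proof.
  intro Hq. destruct (Hdecomp q) as [v [c [Cc ->]]].
  assert (Hv : psi v = gone).
  { rewrite <- Hjpsi. replace (j v) with (gmul (gmul (j v) c) (ginv c))
      by (rewrite <- gmulA, mulgVr; apply mulg1).
    rewrite HPhi0, Hq, gmul1, (homV _ HPhi0), (homV _ Hpi), Cker by exact Cc. apply inv1. }
  destruct (consequence_central (HR Hv)) as [c' [Cc' Bc']].
  (* [j v c = (c' c) * (c'^-1 j v)] with [c' c] in [C ∩ ker Phi0] *)
  assert (E : gmul (j v) c = gmul (gmul c' c) (gmul (ginv c') (j v))).
  { rewrite <- gmulA, (Ccen (gmul (ginv c') (j v)) Cc), !gmulA, mulgVr, gmul1.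
    reflexivity. }
  rewrite E in Hq |- *. apply HB; [| exact Bc'].
  apply HCB; [apply HC; auto |].
  rewrite HPhi0, (BPhi0 Bc'), mulg1 in Hq. exact Hq.
Qed.
End CentralKernel.

Definition comm (H : grp) (u v : H) : H := gmul (gmul (ginv u) (ginv v)) (gmul u v).

Lemma comm_one (H : grp) (u v : H) : comm u v = gone <-> gmul u v = gmul v u.
Proof.
  unfold comm. split; intro E.
  - symmetry. apply eq_of_div. rewrite invM. exact E.
  - rewrite E, <- gmulA, mulVK. apply gmulV.
Qed.

Lemma hom_comm (H H' : grp) (f : H -> H') u v : is_hom f -> f (comm u v) = comm (f u) (f v).
Proof. intro Hf. unfold comm. rewrite !Hf, !(homV _ Hf). reflexivity. Qed.

Section CentralExtension.
Variables (P P' : grp) (pi : P -> P') (Lc : list P).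
Hypotheses (Hpi : is_hom pi) (Spi : forall y, exists x, pi x = y).
Hypothesis Hker : forall c, pi c = gone <-> gen (in_list Lc) c.
Hypothesis Hcen : forall c d, pi c = gone -> gmul c d = gmul d c.

Variables (n : nat) (Fn : grp) (x : {i : nat | i < n} -> Fn) (psi : Fn -> P') (R : list Fn).
Hypotheses (Hx : is_free_on x) (Hpsi : is_hom psi) (Spsi : forall y, exists v, psi v = y).
Hypothesis HR : forall v, psi v = gone <-> normal_closure R v.

Definition pgen (i : nat) : P :=
  match lt_dec i n with
  | left p => epsilon (inhabits gone) (fun y => pi y = psi (x (exist _ i p)))
  | right _ => nth (i - n) Lc gone
  end.

Lemma pi_pgen i (p : i < n) : pi (pgen i) = psi (x (exist _ i p)).
Proof.
  unfold pgen. destruct (lt_dec i n) as [l|l]; [|contradiction].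
  replace l with p by apply proof_irrelevance.
  apply (epsilon_spec (inhabits gone) (fun y => pi y = psi (x (exist _ i p)))), Spi.
Qed.

Definition ngens : nat := n + length Lc.
Definition Wfree : grp := FG {j : nat | j < ngens}.
Definition Phi : Wfree -> P := flift (fun j : {j : nat | j < ngens} => pgen (proj1_sig j)).

Lemma Phi_hom : is_hom Phi.
Proof. apply flift_hom. Qed.

Lemma Phi_gen i : i < ngens -> Phi (fgen_nat ngens i) = pgen i.
Proof. apply flift_nat. Qed.

Definition iota : Fn -> Wfree :=
  proj1_sig (constructive_indefinite_description _
               (@Hx Wfree (fun i => fgen_nat ngens (proj1_sig i)))).

Lemma iota_spec : is_hom iota /\ forall i, iota (x i) = fgen_nat ngens (proj1_sig i).
Proof.
  unfold iota. set (s := constructive_indefinite_description _ _).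
  destruct (proj2_sig s) as [Hf [Ef _]]. split; [exact Hf | exact Ef].
Qed.

Lemma Phi_iota v : pi (Phi (iota v)) = psi v.
Proof.
  destruct iota_spec as [Hiota Eiota].
  apply (free_unique (p1 := fun v => pi (Phi (iota v))) (p2 := psi) Hx).
  - apply hom_comp; [exact Hpi |]. apply hom_comp; [exact Phi_hom | exact Hiota].
  - exact Hpsi.
  - intros [i p]. rewrite Eiota. cbn [proj1_sig].
    rewrite Phi_gen by (unfold ngens; lia). apply pi_pgen.
Qed.

Definition zs : list Wfree := map (fun t => fgen_nat ngens (n + t)) (seq 0 (length Lc)).

Lemma Phi_zs z : In z zs -> In (Phi z) Lc.
Proof.
  intro Hz. apply in_map_iff in Hz. destruct Hz as [t [<- Ht]]. apply in_seq in Ht.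
  rewrite Phi_gen by (unfold ngens; lia). unfold pgen.
  destruct (lt_dec (n + t) n); [lia |]. apply nth_In. lia.
Qed.

Lemma zs_onto c : In c Lc -> exists z, In z zs /\ Phi z = c.
Proof.
  intro Hc. destruct (In_nth Lc c gone Hc) as [t [Ht Et]].
  exists (fgen_nat ngens (n + t)). split.
  - apply in_map_iff. exists t. split; [reflexivity | apply in_seq; lia].
  - rewrite Phi_gen by (unfold ngens; lia). unfold pgen.
    destruct (lt_dec (n + t) n); [lia |]. now replace (n + t - n) with t by lia.
Qed.

Lemma Phi_zgen u : gen (in_list zs) u -> pi (Phi u) = gone.
Proof.
  intro Hu. apply Hker. apply (gen_image Phi_hom (P := in_list zs)); [exact Phi_zs | exact Hu].
Qed.

Lemma ker_pi_lift c : pi c = gone -> exists u, gen (in_list zs) u /\ Phi u = c.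
Proof.
  intro Hc. apply Hker in Hc.
  apply (gen_lift Phi_hom (Q := in_list Lc)); [exact zs_onto | exact Hc].
Qed.

Lemma Phi_onto y : exists w, Phi w = y.
Proof.
  destruct (Spsi (pi y)) as [v Ev].
  destruct (ker_pi_lift (c := gmul y (ginv (Phi (iota v))))) as [u [_ Eu]].
  { rewrite Hpi, homV, Phi_iota, Ev by auto. apply mulgVr. }
  exists (gmul u (iota v)). rewrite Phi_hom, Eu, <- gmulA, gmulV. apply mulg1.
Qed.
Definition comms : list Wfree :=
  flat_map (fun i => map (comm (fgen_nat ngens i)) zs) (seq 0 ngens).

Lemma comms_spec r :
  In r comms <-> exists i z, i < ngens /\ In z zs /\ r = comm (fgen_nat ngens i) z.
Proof.
  unfold comms. rewrite in_flat_map. split.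
  - intros [i [Hi Hr]]. apply in_map_iff in Hr. destruct Hr as [z [<- Hz]].
    apply in_seq in Hi. exists i, z. repeat split; auto; lia.
  - intros [i [z [Hi [Hz ->]]]]. exists i. split; [apply in_seq; lia | apply in_map, Hz].
Qed.

Lemma Phi_comms r : In r comms -> Phi r = gone.
Proof.
  intro Hr. apply comms_spec in Hr. destruct Hr as [i [z [_ [Hz ->]]]].
  rewrite hom_comm by exact Phi_hom. apply comm_one. symmetry.
  apply Hcen, Phi_zgen, gen_incl, Hz.
Qed.

(** [Q0 = Wfree / <<comms>>], in which the images of the [zs] are central. *)
Definition M0 : Wfree -> Prop := ngen (in_list comms).
Definition Q0 : grp := quot (ngen_normal (in_list comms)).
Definition rho : Wfree -> Q0 := qmk M0.

Lemma rho_hom : is_hom rho.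
Proof. apply qmk_hom. Qed.

Lemma Phi_M0 w : M0 w -> Phi w = gone.
Proof.
  intro Hw. apply (Hw (fun w => Phi w = gone));
    [apply kernel_normal, Phi_hom | exact Phi_comms].
Qed.

Definition Phi0 : Q0 -> P := qlift (HK := ngen_normal (in_list comms)) Phi.

Lemma Phi0_rho w : Phi0 (rho w) = Phi w.
Proof. apply qlift_mk; [exact Phi_hom | exact Phi_M0]. Qed.

Lemma Phi0_hom : is_hom Phi0.
Proof. apply qlift_hom; [exact Phi_hom | exact Phi_M0]. Qed.

Definition zbar : list Q0 := map rho zs.
Definition Zsub : Q0 -> Prop := gen (in_list zbar).

Lemma zbar_central z q : In z zs -> cent (rho z) q.
Proof.
  intro Hz. destruct (qmk_surjective q) as [w <-]. revert w.
  apply (free_gen (@FG_free {j : nat | j < ngens}) (S := fun w => cent (rho z) (rho w))).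
  - apply preim_sub; [apply rho_hom | apply cent_sub].
  - intro i. rewrite <- fgen_nat_fgen. unfold cent. apply comm_one.
    rewrite <- hom_comm by apply rho_hom. apply qmk_one, ngen_incl, comms_spec.
    exists (proj1_sig i), z. split; [apply proj2_sig | auto].
Qed.

Lemma Zsub_central c q : Zsub c -> gmul c q = gmul q c.
Proof.
  intro Hc. apply (Hc (cent q)); [apply cent_sub |].
  intros y Hy. apply in_map_iff in Hy. destruct Hy as [z [<- Hz]].
  apply cent_sym, zbar_central, Hz.
Qed.

Lemma Zsub_ker c : Zsub c -> pi (Phi0 c) = gone.
Proof.
  intro Hc. apply (Hc (fun q => pi (Phi0 q) = gone)).
  - apply kernel_normal, hom_comp; [exact Hpi | exact Phi0_hom].
  - intros y Hy. apply in_map_iff in Hy. destruct Hy as [z [<- Hz]].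
    rewrite Phi0_rho. apply Phi_zgen, gen_incl, Hz.
Qed.

Lemma zs_spec i : n <= i < ngens -> In (fgen_nat ngens i) zs.
Proof.
  intro Hi. apply in_map_iff. exists (i - n).
  split; [f_equal; lia | apply in_seq; unfold ngens in Hi; lia].
Qed.

Lemma Q0_decomp q : exists v c, Zsub c /\ q = gmul (rho (iota v)) c.
Proof.
  destruct iota_spec as [Hiota Eiota].
  destruct (qmk_surjective q) as [w <-]. revert w.
  apply (free_gen (@FG_free {j : nat | j < ngens})
           (S := fun w => exists v c, Zsub c /\ rho w = gmul (rho (iota v)) c)).
  - apply (preim_sub (T := fun q => exists v c, Zsub c /\ q = gmul (rho (iota v)) c)).
    + exact rho_hom.
    + apply mul_central_sub; [apply hom_comp; [exact rho_hom | exact Hiota] |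
                              apply gen_sub | exact Zsub_central].
  - intros [i p]. rewrite <- fgen_nat_fgen. cbn [proj1_sig].
    destruct (lt_dec i n) as [l|l].
    + exists (x (exist _ i l)), gone. split; [apply gen_sub |].
      rewrite Eiota, mulg1. reflexivity.
    + exists gone, (rho (fgen_nat ngens i)). split.
      * apply gen_incl, in_map, zs_spec. lia.
      * rewrite (hom1 Hiota), (hom1 rho_hom). symmetry. apply gmul1.
Qed.

Definition rel_lift (r : Fn) : Wfree :=
  epsilon (inhabits gone) (fun u => gen (in_list zs) u /\ Phi u = Phi (iota r)).

Lemma rel_lift_spec r :
  In r R -> gen (in_list zs) (rel_lift r) /\ Phi (rel_lift r) = Phi (iota r).
Proof.
  intro Hr. apply (epsilon_spec (inhabits gone)
                     (fun u => gen (in_list zs) u /\ Phi u = Phi (iota r))).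
  apply ker_pi_lift. rewrite Phi_iota. apply HR. intros N _ HN. apply HN, Hr.
Qed.

Section Relators.
Variable T0 : list Q0.
Hypothesis HT0 : forall t, In t T0 -> Zsub t /\ Phi0 t = gone.
Hypothesis HT0gen : forall q, Zsub q -> Phi0 q = gone -> gen (in_list T0) q.

Definition relators : list Wfree :=
  comms ++ map (fun r => gmul (ginv (rel_lift r)) (iota r)) R ++ map (@qrep Wfree M0) T0.
Definition Mrel : Wfree -> Prop := ngen (in_list relators).

Lemma Phi_M w : Mrel w -> Phi w = gone.
Proof.
  intro Hw. apply (Hw (fun w => Phi w = gone)); [apply kernel_normal, Phi_hom |].
  intros r Hr. apply in_app_or in Hr. destruct Hr as [Hr|Hr]; [exact (Phi_comms Hr) |].
  apply in_app_or in Hr. destruct Hr as [Hr|Hr]; apply in_map_iff in Hr.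
  - destruct Hr as [r' [<- Hr']].
    rewrite Phi_hom, (homV _ Phi_hom), (proj2 (rel_lift_spec Hr')). apply gmulV.
  - destruct Hr as [t [<- Ht]]. rewrite <- Phi0_rho. unfold rho. rewrite qmk_rep.
    apply (HT0 Ht).
Qed.

(** The image of [Mrel] in [Q0], whose preimage is [Mrel] since [M0 ⊆ Mrel]. *)
Definition Mrel_bar (q : Q0) : Prop := exists w, Mrel w /\ rho w = q.

Lemma Mrel_bar_normal : normal Mrel_bar.
Proof.
  apply image_normal; [exact rho_hom | apply qmk_surjective | apply ngen_normal].
Qed.

Lemma Mrel_of_bar w : Mrel_bar (rho w) -> Mrel w.
Proof.
  intros [w' [Mw' E]]. apply (qmk_eq_div (ngen_normal (in_list comms))) in E.
  apply (ngen_mono (P := in_list comms) (Q := in_list relators)) in E;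
    [| intros y Hy; apply in_or_app; auto].
  rewrite <- (mulKV w' w). apply ngen_normal; auto.
Qed.

Lemma ker_Phi w : Phi w = gone -> Mrel w.
Proof.
  intro Hw. apply Mrel_of_bar. rewrite <- Phi0_rho in Hw. revert Hw.
  destruct iota_spec as [Hiota _].
  apply (central_kernel (Phi0 := Phi0) (pi := pi) (psi := psi)
           (j := fun v => rho (iota v)) (C := Zsub) (B := Mrel_bar) (R := R)).
  - exact Phi0_hom.
  - exact Hpi.
  - apply hom_comp; [exact rho_hom | exact Hiota].
  - intro v. apply HR.
  - intro v. rewrite Phi0_rho. apply Phi_iota.
  - apply gen_sub.
  - exact Zsub_central.
  - exact Zsub_ker.
  - exact Mrel_bar_normal.
  - intros q [w' [Mw' <-]]. rewrite Phi0_rho. apply Phi_M, Mw'.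
  - exact Q0_decomp.
  - intros r Hr. exists (rho (rel_lift r)). split.
    + apply (gen_image rho_hom (P := in_list zs)); [intros y Hy; apply in_map, Hy |].
      apply (rel_lift_spec Hr).
    + exists (gmul (ginv (rel_lift r)) (iota r)). split.
      * apply ngen_incl, in_or_app. right. apply in_or_app. left.
        apply (in_map (fun r => gmul (ginv (rel_lift r)) (iota r))), Hr.
      * rewrite rho_hom, (homV _ rho_hom). reflexivity.
  - intros c Cc Hc. apply (HT0gen Cc Hc); [apply Mrel_bar_normal |].
    intros t Ht. exists (qrep t). split; [| apply qmk_rep].
    apply ngen_incl, in_or_app. right. apply in_or_app. right. apply in_map, Ht.
Qed.

Lemma relators_present : fin_pres P.
Proof.
  exists ngens, Wfree, (@fgen {j : nat | j < ngens}). split; [apply FG_free |].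
  exists Phi. split; [exact Phi_hom | split; [exact Phi_onto |]].
  exists relators. intro w. split; [apply ker_Phi | apply Phi_M].
Qed.
End Relators.

Lemma ext_fin_pres : fin_pres P.
Proof.
  destruct (abelian_sub_fin_gen (L := zbar)) with (S := fun q => Zsub q /\ Phi0 q = gone)
    as [T0 [HT0 HT0gen]].
  - intros a b Ha _. apply Zsub_central, gen_incl, Ha.
  - apply sub_inter; [apply gen_sub | apply (kernel_normal Phi0_hom)].
  - intros q [Cq _]. exact Cq.
  - apply (relators_present HT0). intros q Cq Hq. apply HT0gen. auto.
Qed.
End CentralExtension.

Lemma central_ext_fin_pres (P P' : grp) (pi : P -> P') (Lc : list P) :
  is_hom pi -> (forall y, exists x, pi x = y) ->
  (forall c, pi c = gone <-> gen (in_list Lc) c) ->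
  (forall c d, pi c = gone -> gmul c d = gmul d c) -> fin_pres P' -> fin_pres P.
Proof.
  intros Hpi Spi Hker Hcen [n [Fn [x [Hx [psi [Hpsi [Spsi [R HR]]]]]]]].
  exact (ext_fin_pres Hpi Spi Hker Hcen Hx Hpsi Spsi HR).
Qed.

(** * Comparing two quotients of a group *)

Lemma fin_gen_list (G : grp) : fin_gen G -> exists L : list G, forall y, gen (in_list L) y.
Proof.
  intros [n [gn Hgn]].
  set (g := fun i => match lt_dec i n with
                     | left p => gn (exist _ i p)
                     | right _ => gone end).
  exists (map g (seq 0 n)). intro y. apply Hgn; [apply gen_sub |].
  intros [i p]. apply gen_incl, in_map_iff. exists i. split; [| apply in_seq; lia].
  unfold g. destruct (lt_dec i n) as [l|l]; [| contradiction].
  do 2 f_equal. apply proof_irrelevance.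
Qed.

(** In a finitely generated group [G] with [G/A] abelian, every normal
    subgroup [N] is finitely generated modulo [A]: its image in the finitely
    generated abelian group [G/A] is finitely generated. *)
Lemma fin_gen_modulo (G : grp) (N A : G -> Prop) (HN : normal N) (HA : normal A) :
  fin_gen G -> (forall g h, A (comm g h)) ->
  exists T, (forall t, In t T -> N t) /\
            forall g, N g -> exists h, gen (in_list T) h /\ A (gmul (ginv h) g).
Proof.
  intros HG HAab. destruct (fin_gen_list HG) as [L HL].
  set (qA := fun g => (qmk A g : quot HA)).
  assert (HqA : is_hom qA) by apply qmk_hom.
  set (S := fun q => exists g, N g /\ qA g = q).
  destruct (abelian_sub_fin_gen (L := map qA L)) with (S := S) as [T [HTS HTgen]].
  { intros a b Ha Hb. apply in_map_iff in Ha. apply in_map_iff in Hb.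
    destruct Ha as [g [<- _]]. destruct Hb as [h [<- _]].
    apply comm_one. rewrite <- hom_comm by exact HqA. apply qmk_one, HAab. }
  { apply image_normal; [exact HqA | apply qmk_surjective | exact HN]. }
  { intros q [g [_ <-]]. apply (gen_image HqA (P := in_list L)); [| apply HL].
    intros y Hy. apply in_map, Hy. }
  set (lift := fun t => epsilon (inhabits gone) (fun g => N g /\ qA g = t)).
  assert (Hlift : forall t, In t T -> N (lift t) /\ qA (lift t) = t)
    by (intros t Ht;
        apply (epsilon_spec (inhabits gone) (fun g => N g /\ qA g = t)), HTS, Ht).
  exists (map lift T). split.
  - intros y Hy. apply in_map_iff in Hy. destruct Hy as [t [<- Ht]]. apply (Hlift t Ht).
  - intros g Ng.
    destruct (gen_lift (P := in_list (map lift T)) (Q := in_list T) HqA) with (z := qA g)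
      as [h [Gh Eh]].
    + intros t Ht. exists (lift t). split; [apply in_map, Ht | apply (Hlift t Ht)].
    + apply HTgen. exists g. auto.
    + exists h. split; [exact Gh | exact (qmk_eq_div HA Eh)].
Qed.

Section Comparison.
Variables (G : grp) (K N : G -> Prop).
Hypotheses (HK : normal K) (HN : normal N) (KN : forall g, K g -> N g).

Definition qcompare : quot HK -> quot HN :=
  qlift (HK := HK) (fun g => (qmk N g : quot HN)).

Lemma qcompare_mk g : qcompare (qmk K g) = qmk N g.
Proof.
  apply qlift_mk; [apply qmk_hom |]. intros h Kh. apply qmk_one, KN, Kh.
Qed.

Lemma qcompare_hom : is_hom qcompare.
Proof.
  apply qlift_hom; [apply qmk_hom |]. intros h Kh. apply qmk_one, KN, Kh.
Qed.

Lemma qcompare_onto y : exists c, qcompare c = y.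
Proof. destruct (qmk_surjective y) as [g <-]. exists (qmk K g). apply qcompare_mk. Qed.

Lemma qcompare_one g : qcompare (qmk K g) = gone <-> N g.
Proof. rewrite qcompare_mk. apply qmk_one. Qed.

Lemma qcompare_ker_central :
  (forall g h, N g -> K (comm g h)) ->
  forall c d, qcompare c = gone -> gmul c d = gmul d c.
Proof.
  intros HNK c d Hc. destruct (qmk_surjective c) as [g <-].
  destruct (qmk_surjective d) as [h <-]. apply qcompare_one in Hc.
  apply comm_one. rewrite <- hom_comm by apply qmk_hom. apply qmk_one, HNK, Hc.
Qed.

Lemma qcompare_ker_gen (A : G -> Prop) (HA : normal A) (T : list G) :
  (forall g, N g -> A g -> K g) -> (forall t, In t T -> N t) ->
  (forall g, N g -> exists h, gen (in_list T) h /\ A (gmul (ginv h) g)) ->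
  forall c, qcompare c = gone <-> gen (in_list (map (fun t => (qmk K t : quot HK)) T)) c.
Proof.
  intros NAK HTN HTgen c. destruct (qmk_surjective c) as [g <-]. rewrite qcompare_one.
  split.
  - intro Ng. destruct (HTgen g Ng) as [h [Gh Ah]].
    assert (Nh : N h) by (apply Gh; [apply HN | exact HTN]).
    replace (qmk K g) with (qmk K h : quot HK).
    + apply (gen_image (qmk_hom HK) (P := in_list T)); [| exact Gh].
      intros y Hy. apply (in_map (fun t => (qmk K t : quot HK))), Hy.
    + apply (qmk_eq HK), NAK; [| exact Ah]. apply HN; [apply HN, Nh | exact Ng].
  - intro Hg. apply (qmk_one HN). rewrite <- qcompare_mk.
    apply (Hg (fun c => qcompare c = gone)); [apply kernel_normal, qcompare_hom |].
    intros y Hy. apply in_map_iff in Hy. destruct Hy as [t [<- Ht]].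
    apply qcompare_one, HTN, Ht.
Qed.
End Comparison.

(** * Residual quotients [RF(G)] and [RF_na(G)] *)

Section ResidualQuotients.
Variables F G : grp.

Definition ker_all : G -> Prop := kerI (fun _ : G -> F => True).
Definition ker_na : G -> Prop := kerI (@na_image G F).
Definition ab_image (f : G -> F) : Prop := forall a b, gmul (f a) (f b) = gmul (f b) (f a).
Definition ker_ab : G -> Prop := kerI ab_image.

Lemma na_or_ab (f : G -> F) : na_image f \/ ab_image f.
Proof.
  destruct (classic (na_image f)) as [H|H]; [left; exact H | right].
  intros a b. apply NNPP. intro E. apply H. exists a, b. exact E.
Qed.

Lemma ker_all_na g : ker_all g -> ker_na g.
Proof. intros Hg f Hf _. apply Hg; auto. Qed.

Lemma ker_na_ab g : ker_na g -> ker_ab g -> ker_all g.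
Proof. intros Ng Ag f Hf _. destruct (na_or_ab f); [apply Ng | apply Ag]; auto. Qed.

Lemma ker_ab_comm g h : ker_ab (comm g h).
Proof. intros f Hf Hab. rewrite hom_comm by exact Hf. apply comm_one, Hab. Qed.

Lemma ker_na_comm g h : ker_na g -> ker_all (comm g h).
Proof.
  intros Ng f Hf _. rewrite hom_comm by exact Hf. apply comm_one.
  destruct (na_or_ab f) as [Hna|Hab]; [| apply Hab].
  rewrite (Ng f Hf Hna), gmul1. symmetry. apply mulg1.
Qed.
End ResidualQuotients.

Theorem mainTheorem7 (F : grp) (HFfree : is_free F) (HFna : nonabelian F)
  (G : grp) (HG : fin_gen G) :
  fin_pres (RF F G) <-> fin_pres (RFna F G).
Proof.
  set (HK := kerI_normal (fun _ : G -> F => True)).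
  set (HN := kerI_normal (@na_image G F)).
  set (pi := @qcompare G _ _ HK HN).
  pose proof (@ker_all_na F G) as KN.
  destruct (fin_gen_modulo HN (kerI_normal (@ab_image F G)) HG (@ker_ab_comm F G))
    as [T [HTN HTgen]].
  pose proof (qcompare_ker_gen (HK := HK) HN KN (kerI_normal (@ab_image F G))
                (@ker_na_ab F G) HTN HTgen) as HLc.
  split.
  - eapply (quot_fin_pres (pi := pi)).
    + apply qcompare_hom, KN.
    + apply qcompare_onto, KN.
    + exact HLc.
  - eapply (central_ext_fin_pres (pi := pi)).
    + apply qcompare_hom, KN.
    + apply qcompare_onto, KN.
    + exact HLc.
    + apply qcompare_ker_central; [exact KN | apply ker_na_comm].
Qed.
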